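(* Let $\Delta\geq3$ be an integer and $(\beta,\gamma)$ antiferromagnetic, $\lambda>0$, with $(\beta,\gamma,\lambda)\neq(\beta,\beta,1)$. Suppose there exists a pair of field gadgets $\mathcal{T}_1,\mathcal{T}_2$ of maximum degree $\Delta$ with $R_{\mathcal{T}_1}=R_{\mathcal{T}_2}$ but $M_{\mathcal{T}_1}\neq M_{\mathcal{T}_2}$. Then one can construct, for $j=0,1,2,\dots$, an infinite sequence of pairs of field gadgets $\mathcal{T}_{1,j},\mathcal{T}_{2,j}$ of maximum degree $\Delta$ with effective fields $R_{1,j},R_{2,j}$ and magnetization gaps $M_{1,j},M_{2,j}$ such that $R_{1,j}=R_{2,j}$ and $M_{1,j}\neq M_{2,j}$ for every $j$, and moreover the values $R_{1,j}$, $j\geq0$, are pairwise distinct.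
   Context: A pair $(\beta,\gamma)$ with $\beta,\gamma\geq0$ is antiferromagnetic if $\beta\gamma\in[0,1)$ and at least one is nonzero. For a graph $G=(V,E)$ and $\lambda>0$, $\mu_{G;\beta,\gamma,\lambda}(\sigma)=\lambda^{|\sigma|}\beta^{m_0(\sigma)}\gamma^{m_1(\sigma)}/Z$ for $\sigma:V\to\{0,1\}$, $|\sigma|=\sum_v\sigma(v)$, $m_0,m_1$ the numbers of edges with both endpoints spin $0$, resp. spin $1$, convention $0^0=1$. A field gadget is a rooted tree $\mathcal{T}$ whose root $\rho$ has degree one; in the special case $\lambda=\frac{1-\beta}{1-\gamma}$ with $\beta\neq\gamma$, a field gadget is such a rooted tree in which in addition a triangle is attached on a subset of the leaves. With $\mu=\mu_{\mathcal{T};\beta,\gamma,\lambda}$, the effective field is $R_{\mathcal{T}}=\frac{1}{\lambda}\frac{\mu(\sigma(\rho)=1)}{\mu(\sigma(\rho)=0)}$ and the magnetization gap is $M_{\mathcal{T}}=\mathbf{E}_\mu[|\sigma|\mid\sigma(\rho)=1]-\mathbf{E}_\mu[|\sigma|\mid\sigma(\rho)=0]$. *)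

From HB Require Import structures.
From mathcomp Require Import all_boot all_order all_algebra.
From mathcomp Require Import reals.
Set Implicit Arguments. Unset Strict Implicit. Unset Printing Implicit Defensive.
Import Order.TTheory GRing.Theory Num.Theory.
Local Open Scope ring_scope.

Record rootedGraph := RGraph { gN : nat; gE : rel 'I_gN; groot : 'I_gN }.

Definition simple_graph (n : nat) (e : rel 'I_n) : Prop :=
  (forall u v, e u v = e v u) /\ (forall u, e u u = false).

Definition deg (n : nat) (e : rel 'I_n) (v : 'I_n) : nat := #|[set u | e v u]|.

Definition nedges (n : nat) (e : rel 'I_n) : nat :=
  #|[set p : 'I_n * 'I_n | (p.1 < p.2)%N && e p.1 p.2]|.

Definition maxdeg_le (T : rootedGraph) (D : nat) : Prop :=
  forall v, (deg (@gE T) v <= D)%N.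

Definition induced_off (n : nat) (e : rel 'I_n) (X : {set 'I_n}) : rel 'I_n :=
  [rel u v | [&& e u v, u \notin X & v \notin X]].

Definition is_tree_off (n : nat) (e : rel 'I_n) (X : {set 'I_n}) : Prop :=
  (forall u v, u \notin X -> v \notin X -> connect (induced_off e X) u v) /\
  nedges (induced_off e X) = (#|~: X| - 1)%N.

(* X is the set of extra vertices of triangles attached to non-root leaves
   of the tree induced on ~X: every x in X has degree 2 and lies in a
   triangle {x, x', y} with x' in X, y a non-root leaf of the tree, and each
   vertex outside X has either 0 or 2 neighbours in X (one triangle per leaf). *)
Definition triangles_on_leaves (n : nat) (e : rel 'I_n) (r : 'I_n)
    (X : {set 'I_n}) : Prop :=
  (forall x, x \in X -> deg e x = 2%N /\
     exists y x', [/\ y \notin X, x' \in X, x' != x, y != r &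
       [/\ e x y, e x x', e x' y & deg (induced_off e X) y = 1%N]]) /\
  (forall y, y \notin X -> #|[set x in X | e y x]| \in [:: 0%N; 2%N]).

(* Field gadget: a rooted tree whose root has degree one; in the special case
   lam = (1-b)/(1-g) with b <> g, triangles may additionally be attached on a
   subset of the (non-root) leaves. *)
Definition is_field_gadget (R : realType) (b g lam : R) (T : rootedGraph) : Prop :=
  simple_graph (@gE T) /\
  exists X : {set 'I_(gN T)},
    [/\ groot T \notin X, deg (@gE T) (groot T) = 1%N,
        is_tree_off (@gE T) X,
        triangles_on_leaves (@gE T) (groot T) X &
        (X != set0 -> lam = (1 - b) / (1 - g) /\ b <> g)].

Definition antiferro (R : realType) (b g : R) : Prop :=
  0 <= b /\ 0 <= g /\ b * g < 1 /\ (b != 0 \/ g != 0).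

Section Gibbs.
Variables (R : realType) (b g lam : R) (T : rootedGraph).
Local Notation V := 'I_(gN T).
Local Notation e := (@gE T).

Definition spins := {ffun V -> bool}.
Definition nones (s : spins) : nat := #|[set v | s v]|.
Definition m0 (s : spins) : nat :=
  #|[set p : V * V | [&& (p.1 < p.2)%N, e p.1 p.2, ~~ s p.1 & ~~ s p.2]]|.
Definition m1 (s : spins) : nat :=
  #|[set p : V * V | [&& (p.1 < p.2)%N, e p.1 p.2, s p.1 & s p.2]]|.
(* unnormalised Gibbs weight lam^|s| b^m0 g^m1 (with 0^0 = 1) *)
Definition weight (s : spins) : R := lam ^+ nones s * b ^+ m0 s * g ^+ m1 s.
Definition Zpart : R := \sum_(s : spins) weight s.
Definition mu (s : spins) : R := weight s / Zpart.

Definition mu_root (c : bool) : R := \sum_(s : spins | s (groot T) == c) mu s.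

Definition cond_mag (c : bool) : R :=
  (\sum_(s : spins | s (groot T) == c) mu s * (nones s)%:R) / mu_root c.

Definition eff_field : R := lam^-1 * (mu_root true / mu_root false).
Definition mag_gap : R := cond_mag true - cond_mag false.
End Gibbs.

From HB Require Import structures.
From mathcomp Require Import all_boot all_order all_algebra.
From mathcomp Require Import reals.
From mathcomp Require Import ring lra zify.

(* Let X(T) = Zroot T true / Zroot T false (the effective field is X(T) / lam).  Joining
   the root of H to the root of G by an edge multiplies X(G) by edge_ratio (X(H)), where
   edge_ratio x = (g x + 1) / (x + b), and adds edge_slope (X(H)) * M_H to the
   magnetization gap M_G, where edge_slope x = x (b g - 1) / ((g x + 1) (x + b)) is
   nonzero for x > 0 since b g < 1.  Hence for any gadget S, T |-> node T S maps a pair of gadgets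
   with equal fields and distinct gaps to another such pair, and acts on X through the
   increasing map y |-> lam edge_ratio (lam edge_ratio y edge_ratio (X S)).  Two gadgets
   with distinct ratios exist (the edge and node edge edge, or, when edge_ratio lam = 1,
   the edge and the triangle gadget), so some S does not fix X(T1); the iterates of
   node _ S then have strictly monotone, hence pairwise distinct, effective fields. *)

Set Implicit Arguments. Unset Strict Implicit. Unset Printing Implicit Defensive.
Import Order.TTheory GRing.Theory Num.Theory.

Lemma split_lshift m n (i : 'I_m) : split (lshift n i) = inl i.
Proof. exact: (unsplitK (inl _)). Qed.

Lemma split_rshift m n (i : 'I_n) : split (rshift m i) = inr i.
Proof. exact: (unsplitK (inr _)). Qed.

Lemma card_set_sum (T : finType) (P : pred T) : #|[set x | P x]| = \sum_x P x.
Proof. by rewrite -sum1dep_card big_mkcond /=; apply: eq_bigr => x _; case: (P x). Qed.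

Lemma card_pairs (T : finType) (P : rel T) :
  #|[set p : T * T | P p.1 p.2]| = \sum_x \sum_y P x y.
Proof. by rewrite card_set_sum -(pair_bigA _ (fun x y => P x y : nat)). Qed.

Lemma card_split_ord m n (P : pred 'I_(m + n)) :
  #|[set x | P x]| = #|[set i | P (lshift n i)]| + #|[set j | P (rshift m j)]|.
Proof. by rewrite !card_set_sum big_split_ord. Qed.

Lemma eq_deg k (e e' : rel 'I_k) : e =2 e' -> deg e =1 deg e'.
Proof. by move=> ee' v; apply: eq_card => u; rewrite !inE ee'. Qed.

Lemma eq_nedges k (e e' : rel 'I_k) : e =2 e' -> nedges e = nedges e'.
Proof. by move=> ee'; apply: eq_card => p; rewrite !inE ee'. Qed.

Lemma homo_connect k k' (e : rel 'I_k) (e' : rel 'I_k') (f : 'I_k -> 'I_k') :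
  (forall x y, e x y -> e' (f x) (f y)) ->
  forall x y, connect e x y -> connect e' (f x) (f y).
Proof.
move=> ef x y /connectP [p]; elim: p x => [|z p IHp] x /=; first by move=> _ ->.
by case/andP=> exz pz ey; apply: connect_trans (connect1 (ef _ _ exz)) (IHp z pz ey).
Qed.

Definition attach_rel m n (eG : rel 'I_m) (eH : rel 'I_n) (a : 'I_m) (r : 'I_n) :
    rel 'I_(m + n) := fun u v =>
  match split u, split v with
  | inl i, inl j => eG i j
  | inr i, inr j => eH i j
  | inl i, inr j => (i == a) && (j == r)
  | inr i, inl j => (j == a) && (i == r)
  end.

Definition attach_set m n (XG : {set 'I_m}) (XH : {set 'I_n}) : {set 'I_(m + n)} :=
  [set x | match split x with inl i => i \in XG | inr j => j \in XH end].

Section AttachRel.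
Variables (m n : nat) (eG : rel 'I_m) (eH : rel 'I_n) (a : 'I_m) (r : 'I_n).

Local Notation e := (attach_rel eG eH a r).

Lemma attach_relLL i j : e (lshift n i) (lshift n j) = eG i j.
Proof. by rewrite /attach_rel !split_lshift. Qed.
Lemma attach_relRR i j : e (rshift m i) (rshift m j) = eH i j.
Proof. by rewrite /attach_rel !split_rshift. Qed.
Lemma attach_relLR i j : e (lshift n i) (rshift m j) = (i == a) && (j == r).
Proof. by rewrite /attach_rel split_lshift split_rshift. Qed.
Lemma attach_relRL i j : e (rshift m i) (lshift n j) = (j == a) && (i == r).
Proof. by rewrite /attach_rel split_lshift split_rshift. Qed.

Definition attach_relE :=
  (attach_relLL, attach_relRR, attach_relLR, attach_relRL).

Lemma card_attach_edges (Q : rel 'I_(m + n)) :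
  #|[set p : 'I_(m + n) * 'I_(m + n) | [&& (p.1 < p.2)%N, e p.1 p.2 & Q p.1 p.2]]| =
  #|[set p : 'I_m * 'I_m | [&& (p.1 < p.2)%N, eG p.1 p.2 & Q (lshift n p.1) (lshift n p.2)]]|
  + #|[set p : 'I_n * 'I_n | [&& (p.1 < p.2)%N, eH p.1 p.2 & Q (rshift m p.1) (rshift m p.2)]]|
  + Q (lshift n a) (rshift m r).
Proof.
rewrite (card_pairs (fun x y : 'I_(m + n) => [&& (x < y)%N, e x y & Q x y])).
rewrite (card_pairs (fun x y : 'I_m => [&& (x < y)%N, eG x y & Q (lshift n x) (lshift n y)])).
rewrite (card_pairs (fun x y : 'I_n => [&& (x < y)%N, eH x y & Q (rshift m x) (rshift m y)])).
have rowL i : (\sum_(j : 'I_(m + n)) [&& (lshift n i < j)%N, e (lshift n i) j & Q (lshift n i) j]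
    = \sum_(j : 'I_m) [&& (i < j)%N, eG i j & Q (lshift n i) (lshift n j)]
      + (Q (lshift n i) (rshift m r) && (i == a)))%N.
  rewrite big_split_ord /=; congr (_ + _)%N.
    by apply: eq_bigr => j _; rewrite attach_relLL.
  rewrite (bigD1 r) //= big1 ?addn0 => [|j /negbTE nj]; last by rewrite attach_relLR nj !andbF.
  rewrite attach_relLR eqxx andbT (leq_trans (ltn_ord i) (leq_addr _ _)).
  by case: (i == a); case: (Q _ _).
have rowR i : (\sum_(j : 'I_(m + n)) [&& (rshift m i < j)%N, e (rshift m i) j & Q (rshift m i) j]
    = \sum_(j : 'I_n) [&& (i < j)%N, eH i j & Q (rshift m i) (rshift m j)])%N.
  rewrite big_split_ord /= big1 ?add0n => [|j _]; last first.
    by rewrite ltnNge (leq_trans (ltnW (ltn_ord j)) (leq_addr _ _)).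
  by apply: eq_bigr => j _; rewrite attach_relRR ltn_add2l.
rewrite big_split_ord /= (eq_bigr _ (fun i _ => rowL i)) (eq_bigr _ (fun i _ => rowR i)).
rewrite big_split /=.
have -> : (\sum_(i < m) (Q (lshift n i) (rshift m r) && (i == a)))%N = Q (lshift n a) (rshift m r).
  by rewrite (bigD1 a) //= eqxx andbT big1 ?addn0 // => i /negbTE ->; rewrite andbF.
lia.
Qed.

Lemma nedges_attach : nedges e = nedges eG + nedges eH + 1.
Proof.
have nedgesE k (f : rel 'I_k) : nedges f =
    #|[set p : 'I_k * 'I_k | [&& (p.1 < p.2)%N, f p.1 p.2 & (fun _ _ => true) p.1 p.2]]|.
  by apply: eq_card => p; rewrite !inE andbT.
rewrite nedgesE (card_attach_edges (fun _ _ => true)).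
by congr (_ + _ + _); apply: eq_card => p; rewrite !inE andbT.
Qed.

Lemma deg_attachl i : deg e (lshift n i) = deg eG i + (i == a).
Proof.
rewrite /deg !card_set_sum big_split_ord /=; congr (_ + _).
  by apply: eq_bigr => j _; rewrite attach_relLL.
rewrite (bigD1 r) //= big1 ?addn0 => [|j /negbTE nj]; last by rewrite attach_relLR nj andbF.
by rewrite attach_relLR eqxx andbT.
Qed.

Lemma deg_attachr j : deg e (rshift m j) = deg eH j + (j == r).
Proof.
rewrite /deg !card_set_sum big_split_ord /= addnC; congr (_ + _).
  by apply: eq_bigr => i _; rewrite attach_relRR.
rewrite (bigD1 a) //= big1 ?addn0 => [|i /negbTE ni]; last by rewrite attach_relRL ni.
by rewrite attach_relRL eqxx.
Qed.

End AttachRel.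

Section AttachSet.
Variables (m n : nat) (eG : rel 'I_m) (eH : rel 'I_n) (a : 'I_m) (r : 'I_n).
Variables (XG : {set 'I_m}) (XH : {set 'I_n}).
Local Notation e := (attach_rel eG eH a r).
Local Notation X := (attach_set XG XH).

Lemma mem_attach_setl i : (lshift n i \in X) = (i \in XG).
Proof. by rewrite inE split_lshift. Qed.
Lemma mem_attach_setr j : (rshift m j \in X) = (j \in XH).
Proof. by rewrite inE split_rshift. Qed.

Definition mem_attach_setE := (mem_attach_setl, mem_attach_setr).

Lemma attach_set_neq0 : X != set0 -> XG != set0 \/ XH != set0.
Proof.
case/set0Pn=> x; rewrite -(splitK x); case: (split x) => i /=; rewrite mem_attach_setE => iX.
  by left; apply/set0Pn; exists i.
by right; apply/set0Pn; exists i.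
Qed.

Hypotheses (aXG : a \notin XG) (rXH : r \notin XH).

Lemma induced_off_attach :
  induced_off e X =2 attach_rel (induced_off eG XG) (induced_off eH XH) a r.
Proof.
move=> u v; rewrite -(splitK u) -(splitK v).
by case: (split u) => i; case: (split v) => j;
  rewrite /induced_off /= !attach_relE !mem_attach_setE //;
  do 2?case: eqP => [->|] //=; rewrite ?(negbTE aXG) ?(negbTE rXH) ?andbF.
Qed.

Lemma simple_attach : simple_graph eG -> simple_graph eH -> simple_graph e.
Proof.
move=> [symG irrG] [symH irrH]; split=> [u v|u].
  rewrite -(splitK u) -(splitK v).
  by case: (split u) => i; case: (split v) => j; rewrite /= !attach_relE.
by rewrite -(splitK u); case: (split u) => i; rewrite /= !attach_relE.
Qed.

Lemma tree_off_attach : is_tree_off eG XG -> is_tree_off eH XH -> is_tree_off e X.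
Proof.
move=> [connG edgesG] [connH edgesH]; split.
  have connL i j : i \notin XG -> j \notin XG ->
      connect (induced_off e X) (lshift n i) (lshift n j).
    move=> iX jX; apply: (homo_connect (e := induced_off eG XG)) (connG _ _ iX jX) => x y.
    by rewrite induced_off_attach attach_relLL.
  have connR i j : i \notin XH -> j \notin XH ->
      connect (induced_off e X) (rshift m i) (rshift m j).
    move=> iX jX; apply: (homo_connect (e := induced_off eH XH)) (connH _ _ iX jX) => x y.
    by rewrite induced_off_attach attach_relRR.
  have bridge : induced_off e X (lshift n a) (rshift m r).
    by rewrite induced_off_attach attach_relLR !eqxx.
  move=> u v; rewrite -(splitK u) -(splitK v).
  case: (split u) => i; case: (split v) => j /=; rewrite !mem_attach_setE => iX jX.
  - exact: connL.
  - exact: connect_trans (connL _ _ iX aXG) (connect_trans (connect1 bridge) (connR _ _ rXH jX)).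
  - apply: connect_trans (connR _ _ iX rXH) (connect_trans (connect1 _) (connL _ _ aXG jX)).
    by rewrite induced_off_attach attach_relRL !eqxx.
  - exact: connR.
have cardC : #|~: X| = #|~: XG| + #|~: XH|.
  rewrite -[~: X]setTI -setIdE card_split_ord.
  by congr (_ + _); apply: eq_card => x; rewrite !inE ?split_lshift ?split_rshift.
have : 0 < #|~: XG| by apply/card_gt0P; exists a; rewrite inE.
have : 0 < #|~: XH| by apply/card_gt0P; exists r; rewrite inE.
by rewrite (eq_nedges induced_off_attach) nedges_attach edgesG edgesH cardC; lia.
Qed.

Lemma card_attach_nbrl i : #|[set x in X | e (lshift n i) x]| = #|[set x in XG | eG i x]|.
Proof.
rewrite card_split_ord [X in (_ + X)%N](_ : _ = 0) ?addn0.
  by apply: eq_card => x; rewrite !inE split_lshift attach_relLL.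
apply: eq_card0 => x; rewrite !inE split_rshift attach_relLR.
by apply/andP=> -[xX /andP[_ /eqP xr]]; rewrite xr (negbTE rXH) in xX.
Qed.

Lemma card_attach_nbrr j : #|[set x in X | e (rshift m j) x]| = #|[set x in XH | eH j x]|.
Proof.
rewrite card_split_ord [X in (X + _)%N](_ : _ = 0) ?add0n.
  by apply: eq_card => x; rewrite !inE split_rshift attach_relRR.
apply: eq_card0 => x; rewrite !inE split_lshift attach_relRL.
by apply/andP=> -[xX /andP[/eqP xa _]]; rewrite xa (negbTE aXG) in xX.
Qed.

Lemma triangles_attach rG : simple_graph eG -> #|[set x in XG | eG a x]| = 0 ->
  triangles_on_leaves eG rG XG -> triangles_on_leaves eH r XH ->
  triangles_on_leaves e (lshift n rG) X.
Proof.
move=> [symG _] a_free [triG cntG] [triH cntH]; split; last first.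
  move=> y; rewrite -(splitK y); case: (split y) => i /=; rewrite mem_attach_setE => iX.
    by rewrite card_attach_nbrl; apply: cntG.
  by rewrite card_attach_nbrr; apply: cntH.
move=> x; rewrite -(splitK x); case: (split x) => i /=; rewrite mem_attach_setE => iX.
  have [degi [y [x' [yX x'X x'i yr [iy ix' x'y degy]]]]] := triG i iX.
  have ya : (y == a) = false.
    apply/negbTE/eqP=> ya.
    by move: (card0_eq a_free i); rewrite !inE iX -ya symG iy.
  have ia : (i == a) = false by apply: contraNF aXG => /eqP <-.
  split; first by rewrite deg_attachl degi ia.
  exists (lshift n y), (lshift n x'); rewrite !mem_attach_setE !eq_shift !attach_relLL.
  by split=> //; split=> //; rewrite (eq_deg induced_off_attach) deg_attachl degy ya.
have [degi [y [x' [yX x'X x'i yr [iy ix' x'y degy]]]]] := triH i iX.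
have ir : (i == r) = false by apply: contraNF rXH => /eqP <-.
split; first by rewrite deg_attachr degi ir.
exists (rshift m y), (rshift m x'); rewrite !mem_attach_setE !eq_shift !attach_relRR.
by split=> //; split=> //; rewrite (eq_deg induced_off_attach) deg_attachr degy (negbTE yr).
Qed.

End AttachSet.

Definition attach (G H : rootedGraph) : rootedGraph :=
  RGraph (attach_rel (@gE G) (@gE H) (groot G) (groot H)) (lshift _ (groot G)).

Definition vertex_graph : rootedGraph := @RGraph 1 (fun _ _ => false) ord0.

Definition pendant (H : rootedGraph) : rootedGraph := attach vertex_graph H.

(* The root of [node T S] has a single child, which is adjacent to the roots of T and S. *)
Definition node (T S : rootedGraph) : rootedGraph := pendant (attach (pendant T) S).

Definition edge_gadget : rootedGraph := pendant vertex_graph.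

Definition triangle_graph : rootedGraph := @RGraph 3 (fun u v => u != v) ord0.

Definition triangle_gadget : rootedGraph := pendant triangle_graph.

Lemma deg_attach_root G H :
  deg (@gE (attach G H)) (groot (attach G H)) = (deg (@gE G) (groot G)).+1.
Proof. by rewrite deg_attachl eqxx addn1. Qed.

Lemma deg_vertex v : deg (@gE vertex_graph) v = 0.
Proof. by apply: eq_card0 => u; rewrite inE. Qed.

Lemma deg_triangle j : deg (@gE triangle_graph) j = 2%N.
Proof. by rewrite /deg card_set_sum !big_ord_recl big_ord0; case: j => -[|[|[|?]]]. Qed.

Lemma maxdeg_attach G H D : maxdeg_le G D -> maxdeg_le H D ->
  (deg (@gE G) (groot G) < D)%N -> (deg (@gE H) (groot H) < D)%N ->
  maxdeg_le (attach G H) D.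
Proof.
move=> maxG maxH rG rH v; rewrite -(splitK v); case: (split v) => i /=.
  by rewrite deg_attachl; case: eqP => [->|_]; rewrite ?addn0 ?addn1.
by rewrite deg_attachr; case: eqP => [->|_]; rewrite ?addn0 ?addn1.
Qed.

Lemma maxdeg_vertex D : maxdeg_le vertex_graph D.
Proof. by move=> v; rewrite deg_vertex. Qed.

Lemma maxdeg_edge D : (0 < D)%N -> maxdeg_le edge_gadget D.
Proof. by move=> D_gt0; apply: maxdeg_attach; rewrite ?deg_vertex //; apply: maxdeg_vertex. Qed.

Lemma maxdeg_node T S D : (3 <= D)%N ->
  deg (@gE T) (groot T) = 1%N -> deg (@gE S) (groot S) = 1%N ->
  maxdeg_le T D -> maxdeg_le S D -> maxdeg_le (node T S) D.
Proof.
move=> D3 rT rS maxT maxS.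
have maxP : maxdeg_le (pendant T) D.
  by apply: maxdeg_attach (maxdeg_vertex D) maxT _ _; rewrite ?deg_vertex ?rT; lia.
have maxA : maxdeg_le (attach (pendant T) S) D.
  by apply: maxdeg_attach maxP maxS _ _; rewrite ?deg_attach_root ?deg_vertex ?rS; lia.
by apply: maxdeg_attach (maxdeg_vertex D) maxA _ _; rewrite ?deg_attach_root ?deg_vertex; lia.
Qed.

Lemma maxdeg_triangle D : (3 <= D)%N -> maxdeg_le triangle_gadget D.
Proof.
move=> D3; apply: maxdeg_attach (maxdeg_vertex D) _ _ _; rewrite ?deg_vertex ?deg_triangle //.
- by move=> v; rewrite deg_triangle ltnW.
- exact: leq_trans D3.
Qed.

Definition leaf_triangle_tree (T : rootedGraph) (X : {set 'I_(gN T)}) : Prop :=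
  [/\ simple_graph (@gE T), groot T \notin X, is_tree_off (@gE T) X &
      triangles_on_leaves (@gE T) (groot T) X].
Arguments leaf_triangle_tree : clear implicits.

Lemma leaf_triangle_tree_attach G H XG XH :
  leaf_triangle_tree G XG -> leaf_triangle_tree H XH ->
  #|[set x in XG | @gE G (groot G) x]| = 0 ->
  leaf_triangle_tree (attach G H) (attach_set XG XH).
Proof.
move=> [simG rGX treeG triG] [simH rHX treeH triH] rG_free; split.
- exact: simple_attach.
- by rewrite /= mem_attach_setl.
- exact: tree_off_attach.
- exact: triangles_attach.
Qed.

Lemma leaf_triangle_tree_vertex : leaf_triangle_tree vertex_graph set0.
Proof.
split=> //; first by rewrite inE.
  split=> [u v _ _|]; first by rewrite (ord1 u) (ord1 v).
  by rewrite setC0 cardsT card_ord; apply: eq_card0 => p; rewrite !inE /induced_off andbF.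
split=> [x|y _]; first by rewrite inE.
by rewrite (_ : [set _ in _ | _] = set0) ?cards0 //; apply/setP => x; rewrite !inE.
Qed.

Lemma card_pendant_root_nbrs H (X : {set 'I_(gN H)}) : groot H \notin X ->
  #|[set x in attach_set set0 X | @gE (pendant H) (groot (pendant H)) x]| = 0.
Proof. by move=> rX; rewrite card_attach_nbrl ?inE //; apply: eq_card0 => x; rewrite !inE. Qed.

Lemma leaf_triangle_tree_pendant H (X : {set 'I_(gN H)}) :
  leaf_triangle_tree H X -> leaf_triangle_tree (pendant H) (attach_set set0 X).
Proof.
move=> ltt_H; apply: leaf_triangle_tree_attach leaf_triangle_tree_vertex ltt_H _.
by apply: eq_card0 => x; rewrite !inE.
Qed.

Section FieldGadgets.
Local Open Scope ring_scope.
Variables (R : realType) (b g lam : R).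
Local Notation field_gadget := (is_field_gadget b g lam).
Local Notation K3 := (@gE triangle_graph).
Local Notation XK := [set x : 'I_3 | x != ord0].

Lemma field_gadget_pendant H (X : {set 'I_(gN H)}) : leaf_triangle_tree H X ->
  (X != set0 -> lam = (1 - b) / (1 - g) /\ b <> g) -> field_gadget (pendant H).
Proof.
move=> ltt_H X_cond; have [simP rootP treeP triP] := leaf_triangle_tree_pendant ltt_H.
split=> //; exists (attach_set set0 X); split=> //.
  by rewrite deg_attach_root deg_vertex.
by case/attach_set_neq0; rewrite ?eqxx.
Qed.

Lemma field_gadget_leaf_triangle_tree T : field_gadget T ->
  [/\ deg (@gE T) (groot T) = 1%N & exists2 X, leaf_triangle_tree T X &
      X != set0 -> lam = (1 - b) / (1 - g) /\ b <> g].
Proof. by move=> [simT [X [rX degT treeT triT X_cond]]]; split=> //; exists X. Qed.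

Lemma field_gadget_edge : field_gadget edge_gadget.
Proof. by apply: field_gadget_pendant leaf_triangle_tree_vertex _; rewrite eqxx. Qed.

Lemma field_gadget_node T S : field_gadget T -> field_gadget S -> field_gadget (node T S).
Proof.
move=> /field_gadget_leaf_triangle_tree [_ [XT lttT condT]].
move=> /field_gadget_leaf_triangle_tree [_ [XS lttS condS]].
have [_ rXT _ _] := lttT.
apply: (field_gadget_pendant (H := attach (pendant T) S) (X := attach_set (attach_set set0 XT) XS)).
  apply: leaf_triangle_tree_attach => //; first exact: leaf_triangle_tree_pendant.
  exact: card_pendant_root_nbrs.
by case/attach_set_neq0 => [/attach_set_neq0 [|//]|//]; rewrite eqxx.
Qed.

Lemma triangle_off_root_isolated : deg (induced_off K3 XK) ord0 = 0%N.
Proof. by rewrite /deg card_set_sum !big_ord_recl big_ord0 /induced_off /= ?inE; vm_compute. Qed.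

Lemma tree_off_triangle : is_tree_off K3 XK.
Proof.
have XKC : ~: XK = [set ord0] by apply/setP => x; rewrite !inE negbK.
split=> [u v|]; first by rewrite !inE !negbK => /eqP-> /eqP->.
rewrite XKC cards1 /nedges (card_pairs (fun x y : 'I_3 => (x < y)%N && induced_off K3 XK x y)).
by rewrite !big_ord_recl !big_ord0 /induced_off /= ?inE; vm_compute.
Qed.

Lemma card_triangle_root_nbrs : #|[set x in XK | K3 ord0 x]| = 2%N.
Proof. by rewrite card_set_sum !big_ord_recl big_ord0 ?inE; vm_compute. Qed.

Lemma triangles_on_leaves_triangle_gadget :
  triangles_on_leaves (@gE triangle_gadget) (groot triangle_gadget) (attach_set set0 XK).
Proof.
have aX : ord0 \notin (set0 : {set 'I_1}) by rewrite inE.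
have rX : ord0 \notin XK by rewrite !inE.
split=> [x|y].
  rewrite -(splitK x); case: (split x) => [i|j] /=; rewrite mem_attach_setE ?inE // => j0.
  have [j' j'0 j'j] : exists2 j', j' != ord0 & j' != j.
    by case: j j0 => -[|[|[|?]]] ? //= _; [exists (@Ordinal 3 2 isT) | exists (@Ordinal 3 1 isT)].
  split; first by rewrite deg_attachr deg_triangle (negbTE j0).
  exists (rshift 1 ord0), (rshift 1 j'); rewrite !mem_attach_setE !inE !eq_shift !attach_relE /=.
  rewrite j0 j'0 j'j eq_sym j'j; split=> //; split=> //.
  by rewrite (eq_deg (induced_off_attach _ K3 aX rX)) deg_attachr triangle_off_root_isolated.
rewrite -(splitK y); case: (split y) => [i|j] /=; rewrite mem_attach_setE => yX.
  by rewrite card_attach_nbrl // (eq_card0 (A := [set x in set0 | _])) // => x; rewrite !inE.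
rewrite card_attach_nbrr //; move: yX; rewrite !inE negbK => /eqP->.
by rewrite card_triangle_root_nbrs.
Qed.

Lemma field_gadget_triangle :
  lam = (1 - b) / (1 - g) /\ b <> g -> is_field_gadget b g lam triangle_gadget.
Proof.
move=> lam_cond; have [simV _ treeV _] := leaf_triangle_tree_vertex.
have simK : simple_graph K3 by split=> [u v|u]; rewrite /= ?eqxx // eq_sym.
have rX : ord0 \notin XK by rewrite !inE.
split; first exact: simple_attach.
exists (attach_set set0 XK); split=> //.
- by rewrite /= mem_attach_setl inE.
- by rewrite deg_attach_root deg_vertex.
- by apply: tree_off_attach => //; [rewrite inE | apply: tree_off_triangle].
- exact: triangles_on_leaves_triangle_gadget.
Qed.

End FieldGadgets.

Local Open Scope ring_scope.

Section Gibbs.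
Variables (R : realType) (b g lam : R).
Local Notation wt := (weight b g lam).

Definition edge_weight (c c' : bool) : R :=
  if c then (if c' then g else 1) else (if c' then 1 else b).
Local Notation w := edge_weight.

Definition Zroot (T : rootedGraph) (c : bool) : R :=
  \sum_(s : spins T | s (groot T) == c) wt s.

Definition Mroot (T : rootedGraph) (c : bool) : R :=
  \sum_(s : spins T | s (groot T) == c) wt s * (nones s)%:R.

Definition root_ratio (T : rootedGraph) : R := Zroot T true / Zroot T false.

Definition msg (H : rootedGraph) (c : bool) : R :=
  w c true * Zroot H true + w c false * Zroot H false.

Definition msg_mag (H : rootedGraph) (c : bool) : R :=
  w c true * Mroot H true + w c false * Mroot H false.

Lemma sum_spins_root (T : rootedGraph) (F : bool -> spins T -> R) :
  \sum_(s : spins T) F (s (groot T)) s =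
  \sum_(s : spins T | s (groot T) == true) F true s +
  \sum_(s : spins T | s (groot T) == false) F false s.
Proof.
rewrite (bigID (fun s : spins T => s (groot T))) /=.
congr (_ + _); apply: eq_big => [s|s root_s] //=; rewrite ?eqb_id ?eqbF_neg //.
  by rewrite root_s.
by rewrite (negbTE root_s).
Qed.

Lemma sum_msg (H : rootedGraph) c :
  \sum_(s : spins H) wt s * w c (s (groot H)) = msg H c.
Proof.
rewrite (sum_spins_root (fun d s => wt s * w c d)) /msg /Zroot !mulr_sumr.
by congr (_ + _); apply: eq_bigr => s _; rewrite mulrC.
Qed.

Lemma sum_msg_mag (H : rootedGraph) c :
  \sum_(s : spins H) wt s * (nones s)%:R * w c (s (groot H)) = msg_mag H c.
Proof.
rewrite (sum_spins_root (fun d s => wt s * (nones s)%:R * w c d)) /msg_mag /Mroot !mulr_sumr.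
by congr (_ + _); apply: eq_bigr => s _; rewrite mulrC.
Qed.

Section AttachSpins.
Variables (G H : rootedGraph).
Local Notation J := (attach G H).

Definition glue (s1 : spins G) (s2 : spins H) : spins J :=
  [ffun k => match split k with inl i => s1 i | inr j => s2 j end].

Lemma glue_lshift s1 s2 i : glue s1 s2 (lshift _ i) = s1 i.
Proof. by rewrite ffunE split_lshift. Qed.

Lemma glue_rshift s1 s2 j : glue s1 s2 (rshift _ j) = s2 j.
Proof. by rewrite ffunE split_rshift. Qed.

Lemma glue_root s1 s2 : glue s1 s2 (groot J) = s1 (groot G).
Proof. exact: glue_lshift. Qed.

Lemma sum_spins_attach (F : spins J -> R) :
  \sum_(s : spins J) F s = \sum_(s1 : spins G) \sum_(s2 : spins H) F (glue s1 s2).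
Proof.
rewrite pair_bigA /= (reindex (fun p : spins G * spins H => glue p.1 p.2)) //=.
exists (fun s => ([ffun i => s (lshift _ i)], [ffun j => s (rshift _ j)])) => [[s1 s2] _|s _] /=.
  by congr (_, _); apply/ffunP => i; rewrite ffunE ?glue_lshift ?glue_rshift.
apply/ffunP => k; rewrite ffunE -(splitK k).
by case: (split k) => i; rewrite /= ?split_lshift ?split_rshift ffunE.
Qed.

Lemma nones_glue s1 s2 : nones (glue s1 s2) = (nones s1 + nones s2)%N.
Proof.
rewrite /nones card_split_ord; congr (_ + _)%N; apply: eq_card => i.
  by rewrite !inE glue_lshift.
by rewrite !inE glue_rshift.
Qed.

Lemma m0_glue s1 s2 : m0 (glue s1 s2) =
  (m0 s1 + m0 s2 + (~~ s1 (groot G) && ~~ s2 (groot H)))%N.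
Proof.
rewrite /m0 (card_attach_edges _ _ _ _ (fun u v => ~~ glue s1 s2 u && ~~ glue s1 s2 v)) /=.
by rewrite !glue_lshift glue_rshift; congr (_ + _ + _)%N; apply: eq_card => p;
  rewrite !inE ?glue_lshift ?glue_rshift.
Qed.

Lemma m1_glue s1 s2 : m1 (glue s1 s2) =
  (m1 s1 + m1 s2 + (s1 (groot G) && s2 (groot H)))%N.
Proof.
rewrite /m1 (card_attach_edges _ _ _ _ (fun u v => glue s1 s2 u && glue s1 s2 v)) /=.
by rewrite !glue_lshift glue_rshift; congr (_ + _ + _)%N; apply: eq_card => p;
  rewrite !inE ?glue_lshift ?glue_rshift.
Qed.

Lemma weight_glue s1 s2 : wt (glue s1 s2) = wt s1 * wt s2 * w (s1 (groot G)) (s2 (groot H)).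
Proof.
rewrite /weight nones_glue m0_glue m1_glue !exprD.
by case: (s1 _); case: (s2 _); rewrite /= ?expr0 ?expr1; ring.
Qed.

Lemma Zroot_attach c : Zroot J c = Zroot G c * msg H c.
Proof.
rewrite /Zroot big_mkcond sum_spins_attach mulr_suml [RHS]big_mkcond.
apply: eq_bigr => s1 _; under eq_bigr do rewrite glue_root weight_glue.
case: eqP => [<-|_]; last by rewrite big1.
by rewrite -sum_msg mulr_sumr; apply: eq_bigr => s2 _; rewrite mulrA.
Qed.

Lemma Mroot_attach c : Mroot J c = Mroot G c * msg H c + Zroot G c * msg_mag H c.
Proof.
rewrite /Mroot /Zroot big_mkcond sum_spins_attach !mulr_suml -big_split [RHS]big_mkcond.
apply: eq_bigr => s1 _.
under eq_bigr do rewrite glue_root weight_glue nones_glue natrD.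
case: eqP => [<-|_]; last by rewrite big1.
rewrite -sum_msg -sum_msg_mag !mulr_sumr -big_split /=.
by apply: eq_bigr => s2 _; ring.
Qed.

End AttachSpins.

Lemma Zroot_vertex c : Zroot vertex_graph c = lam ^+ c.
Proof.
rewrite /Zroot (big_pred1 [ffun=> c]) => [|s]; last first.
  apply/eqP/eqP=> [sc|->]; last by rewrite ffunE.
  by apply/ffunP=> i; rewrite ffunE (ord1 i).
rewrite /weight.
have -> : nones (T := vertex_graph) [ffun=> c] = c by rewrite /nones card_set_sum big_ord1 ffunE.
have -> : m0 (T := vertex_graph) [ffun=> c] = 0%N by apply: eq_card0 => p; rewrite !inE andbF.
have -> : m1 (T := vertex_graph) [ffun=> c] = 0%N by apply: eq_card0 => p; rewrite !inE andbF.
by rewrite !expr0 !mulr1.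
Qed.

Definition triangle_poly (c : bool) : R :=
  if c then lam ^+ 2 * g ^+ 3 + 2%:R * lam * g + b
  else lam ^+ 2 * g + 2%:R * lam * b + b ^+ 3.

Definition spins3 (c0 c1 c2 : bool) : spins triangle_graph :=
  [ffun i : 'I_3 => nth false [:: c0; c1; c2] i].

Lemma sum_spins3 (F : spins triangle_graph -> R) :
  \sum_s F s = \sum_(c0 : bool) \sum_(c1 : bool) \sum_(c2 : bool) F (spins3 c0 c1 c2).
Proof.
transitivity (\sum_(p : bool * (bool * bool)) F (spins3 p.1 p.2.1 p.2.2)).
  rewrite (reindex (fun p : bool * (bool * bool) => spins3 p.1 p.2.1 p.2.2)) //=.
  exists (fun s => (s ord0, (s (inord 1), s (inord 2)))) => [[c0 [c1 c2]] _|s _] /=.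
    by rewrite !ffunE /= !inordK.
  apply/ffunP => -[[|[|[|k]]] lt_k3]; rewrite ffunE //=; congr (s _); apply: val_inj;
    by rewrite /= ?inordK.
transitivity (\sum_(c0 : bool) \sum_(q : bool * bool) F (spins3 c0 q.1 q.2)).
  exact: esym (pair_bigA _ (fun c0 q => F (spins3 c0 q.1 q.2))).
by apply: eq_bigr => c0 _; exact: esym (pair_bigA _ (fun c1 c2 => F (spins3 c0 c1 c2))).
Qed.

Lemma weight_spins3 c0 c1 c2 :
  wt (spins3 c0 c1 c2) = lam ^+ (c0 + c1 + c2) * w c0 c1 * w c0 c2 * w c1 c2.
Proof.
rewrite /weight.
set s := spins3 c0 c1 c2.
have -> : nones s = (c0 + c1 + c2)%N.
  by rewrite /nones card_set_sum !big_ord_recl big_ord0 /s !ffunE /= addn0 addnA.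
have -> : m0 s = (~~ c0 && ~~ c1 + ~~ c0 && ~~ c2 + ~~ c1 && ~~ c2)%N.
  rewrite /m0 (card_pairs (fun i j : 'I_3 => [&& (i < j)%N, i != j, ~~ s i & ~~ s j])).
  by rewrite !big_ord_recl !big_ord0 /s !ffunE /=; clear s; case: c0; case: c1; case: c2.
have -> : m1 s = (c0 && c1 + c0 && c2 + c1 && c2)%N.
  rewrite /m1 (card_pairs (fun i j : 'I_3 => [&& (i < j)%N, i != j, s i & s j])).
  by rewrite !big_ord_recl !big_ord0 /s !ffunE /=; clear s; case: c0; case: c1; case: c2.
by clear s; case: c0; case: c1; case: c2; rewrite /= ?expr0 ?expr1; ring.
Qed.

Lemma Zroot_triangle c : Zroot triangle_graph c = lam ^+ c * triangle_poly c.
Proof.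
rewrite /Zroot big_mkcond sum_spins3 !big_bool /= !weight_spins3 !ffunE /=.
by case: c; rewrite /= ?expr0 ?expr1; ring.
Qed.

End Gibbs.

Section Observables.
Variables (R : realType) (b g lam : R).
Hypotheses (b_ge0 : 0 <= b) (g_ge0 : 0 <= g) (bg_neq0 : b != 0 \/ g != 0) (lam_gt0 : 0 < lam).
Local Notation wt := (weight b g lam).
Local Notation Z := (Zroot b g lam).
Local Notation M := (Mroot b g lam).
Local Notation X := (root_ratio b g lam).

Lemma weight_ge0 T (s : spins T) : 0 <= wt s.
Proof. by rewrite /weight !mulr_ge0 // exprn_ge0 // ltW. Qed.

Lemma Zroot_gt0 T c : 0 < Z T c.
Proof.
pose s : spins T := [ffun v => if v == groot T then c else 0 < g].
have no_edges (P : rel 'I_(gN T)) : (forall u v : 'I_(gN T), (u < v)%N -> ~~ P u v) ->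
    #|[set p : 'I_(gN T) * 'I_(gN T) | [&& (p.1 < p.2)%N, @gE T p.1 p.2 & P p.1 p.2]]| = 0%N.
  move=> nP; apply: eq_card0 => -[u v]; rewrite !inE /=.
  by apply/negP => /and3P [uv _ Puv]; move: (nP _ _ uv); rewrite Puv.
have wt_s : 0 < wt s.
  rewrite /weight; have [g_gt0 | g_le0] := ltP 0 g.
    have -> : m0 s = 0%N.
      apply: (no_edges (fun u v => ~~ s u && ~~ s v)) => u v; rewrite !ffunE g_gt0.
      by case: eqP => [->|_]; case: eqP => [->|_]; rewrite ?ltnn ?andbF.
    by rewrite expr0 mulr1 mulr_gt0 ?exprn_gt0.
  have b_gt0 : 0 < b.
    by case: bg_neq0; rewrite lt_def ?b_ge0 ?andbT // => /negP[]; rewrite eq_le g_le0.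
  have -> : m1 s = 0%N.
    apply: (no_edges (fun u v => s u && s v)) => u v; rewrite !ffunE ltNge g_le0.
    by case: eqP => [->|_]; case: eqP => [->|_]; rewrite ?ltnn ?andbF.
  by rewrite expr0 mulr1 mulr_gt0 ?exprn_gt0.
rewrite /Zroot (bigD1 s) ?ffunE ?eqxx //= ltr_pwDl // sumr_ge0 // => s' _.
exact: weight_ge0.
Qed.

Lemma root_ratio_gt0 T : 0 < X T.
Proof. by rewrite divr_gt0 ?Zroot_gt0. Qed.

Lemma Zpart_neq0 T : Zpart b g lam T != 0.
Proof.
have -> : Zpart b g lam T = Z T true + Z T false.
  by rewrite /Zpart (sum_spins_root (fun _ s => wt s)).
by rewrite lt0r_neq0 // addr_gt0 ?Zroot_gt0.
Qed.

Lemma mu_root_Zroot T c : mu_root b g lam T c = Z T c / Zpart b g lam T.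
Proof. by rewrite /mu_root /Zroot mulr_suml. Qed.

Lemma eff_field_root_ratio T : eff_field b g lam T = lam^-1 * X T.
Proof.
rewrite /eff_field !mu_root_Zroot /root_ratio; congr (_ * _).
by rewrite invf_div mulrA divfK ?Zpart_neq0.
Qed.

Lemma eff_field_eq T T' : eff_field b g lam T = eff_field b g lam T' <-> X T = X T'.
Proof.
rewrite !eff_field_root_ratio; split=> [|-> //].
by apply: mulfI; rewrite invr_neq0 ?lt0r_neq0.
Qed.

Lemma cond_mag_Mroot T c : cond_mag b g lam T c = M T c / Z T c.
Proof.
rewrite /cond_mag mu_root_Zroot /Mroot (eq_bigr (fun s => wt s * (nones s)%:R / Zpart b g lam T)).
  by rewrite -mulr_suml invf_div mulrA divfK ?Zpart_neq0.
by move=> s _; rewrite /mu mulrAC.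
Qed.

End Observables.

Section RatioDynamics.
Variables (R : realType) (b g : R).
Hypotheses (b_ge0 : 0 <= b) (g_ge0 : 0 <= g) (bg_neq0 : b != 0 \/ g != 0) (bg_lt1 : b * g < 1).

Definition edge_ratio (x : R) : R := (g * x + 1) / (x + b).

Lemma edge_ratio_num_gt0 (x : R) : 0 < x -> 0 < g * x + 1.
Proof. by move=> x_gt0; apply: ltr_wpDl ltr01; apply: mulr_ge0 g_ge0 (ltW x_gt0). Qed.

Lemma edge_ratio_den_gt0 (x : R) : 0 < x -> 0 < x + b.
Proof. exact: ltr_wpDr b_ge0. Qed.

Lemma edge_ratio_gt0 (x : R) : 0 < x -> 0 < edge_ratio x.
Proof. by move=> x_gt0; rewrite divr_gt0 ?edge_ratio_num_gt0 ?edge_ratio_den_gt0. Qed.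

Lemma edge_ratio_decr (x y : R) : 0 < x -> x < y -> edge_ratio y < edge_ratio x.
Proof.
move=> x_gt0 xy; have y_gt0 := lt_trans x_gt0 xy.
have [xb yb] := (edge_ratio_den_gt0 x_gt0, edge_ratio_den_gt0 y_gt0).
rewrite -subr_gt0 (_ : _ - _ = (y - x) * (1 - b * g) / ((x + b) * (y + b))).
  by rewrite divr_gt0 ?mulr_gt0 // subr_gt0.
by rewrite /edge_ratio; field; rewrite !lt0r_neq0.
Qed.

Lemma edge_ratio_inj (x y : R) : 0 < x -> 0 < y -> edge_ratio x = edge_ratio y -> x = y.
Proof.
move=> x_gt0 y_gt0 exy; case: (ltgtP x y) => // [xy|yx].
  by move: (edge_ratio_decr x_gt0 xy); rewrite exy ltxx.
by move: (edge_ratio_decr y_gt0 yx); rewrite exy ltxx.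
Qed.

Lemma edge_ratio_fixed (x : R) : 0 < x -> edge_ratio (x * edge_ratio x) = 1 -> edge_ratio x = 1.
Proof.
move=> x_gt0; set a := edge_ratio x => fix_a.
have gxb : 0 < g * x + b.
  have gx := mulr_ge0 g_ge0 (ltW x_gt0).
  case: bg_neq0 => [b_neq0 | g_neq0]; first by rewrite ltr_wpDl // lt_def b_neq0.
  by rewrite ltr_pwDl ?mulr_gt0 // lt_def g_neq0.
have ax : a * (x + b) = g * x + 1 by rewrite /a /edge_ratio divfK ?lt0r_neq0 ?edge_ratio_den_gt0.
have xa : g * (x * a) + 1 = x * a + b by move: fix_a; rewrite /edge_ratio => /divr1_eq.
have : (a - 1) * (g * x + b) = (g * (x * a) + 1 - (x * a + b)) + (a * (x + b) - (g * x + 1)).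
  by ring.
rewrite xa ax !subrr addr0 => /eqP; rewrite mulf_eq0 (gt_eqF gxb) orbF subr_eq0.
by move/eqP.
Qed.

Definition edge_slope (x : R) : R := g * x / (g * x + 1) - x / (x + b).

Lemma edge_slope_neq0 (x : R) : 0 < x -> edge_slope x != 0.
Proof.
move=> x_gt0; have [num den] := (edge_ratio_num_gt0 x_gt0, edge_ratio_den_gt0 x_gt0).
rewrite (_ : edge_slope x = x * (b * g - 1) / ((g * x + 1) * (x + b))).
  have bg1 : b * g - 1 != 0 by rewrite subr_eq0 lt_eqF.
  by rewrite !(mulf_neq0, invr_neq0, bg1, lt0r_neq0 x_gt0, lt0r_neq0 num, lt0r_neq0 den).
by rewrite /edge_slope; field; rewrite !lt0r_neq0.
Qed.

End RatioDynamics.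

Section AttachObservables.
Variables (R : realType) (b g lam : R).
Hypotheses (b_ge0 : 0 <= b) (g_ge0 : 0 <= g) (bg_neq0 : b != 0 \/ g != 0) (lam_gt0 : 0 < lam).
Local Notation Z := (Zroot b g lam).
Local Notation X := (root_ratio b g lam).
Local Notation cond_mag := (cond_mag b g lam).
Local Notation mag_gap := (mag_gap b g lam).

Let Z_neq0 T c : Z T c != 0. Proof. by rewrite lt0r_neq0 ?Zroot_gt0. Qed.

Lemma msg_gt0 H c : 0 < msg b g lam H c.
Proof.
have Z_gt0 := Zroot_gt0 b_ge0 g_ge0 bg_neq0 lam_gt0 H.
have [Z1 Z0] := (Z_gt0 true, Z_gt0 false).
case: c; rewrite /msg /= !mul1r.
  exact: ltr_wpDl (mulr_ge0 g_ge0 (ltW Z1)) Z0.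
exact: ltr_wpDr (mulr_ge0 b_ge0 (ltW Z0)) Z1.
Qed.

Let msg_neq0 H c : msg b g lam H c != 0. Proof. by rewrite lt0r_neq0 ?msg_gt0. Qed.

Lemma msg_ratio H : msg b g lam H true / msg b g lam H false = edge_ratio b g (X H).
Proof.
have := msg_neq0 H false; rewrite /msg /edge_ratio /root_ratio /= !mul1r => nz.
by field; rewrite Z_neq0 nz.
Qed.

Lemma root_ratio_attach G H : X (attach G H) = X G * edge_ratio b g (X H).
Proof.
rewrite -msg_ratio /root_ratio !Zroot_attach.
by field; rewrite Z_neq0 !msg_neq0.
Qed.

Lemma cond_mag_attach G H c :
  cond_mag (attach G H) c = cond_mag G c + msg_mag b g lam H c / msg b g lam H c.
Proof.
rewrite !cond_mag_Mroot // Zroot_attach Mroot_attach.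
by field; rewrite Z_neq0 msg_neq0.
Qed.

Lemma msg_mag_gap H :
  msg_mag b g lam H true / msg b g lam H true - msg_mag b g lam H false / msg b g lam H false
  = edge_slope b g (X H) * mag_gap H.
Proof.
have [nz1 nz0] := (msg_neq0 H true, msg_neq0 H false).
move: nz1 nz0; rewrite /mag_gap !cond_mag_Mroot // /msg /msg_mag /edge_slope /root_ratio /= !mul1r.
by move=> nz1 nz0; field; rewrite !Z_neq0 nz1 nz0.
Qed.

Lemma mag_gap_attach G H :
  mag_gap (attach G H) = mag_gap G + edge_slope b g (X H) * mag_gap H.
Proof. by rewrite -msg_mag_gap /mag_gap !cond_mag_attach; ring. Qed.

End AttachObservables.

Import Order.NatMonotonyTheory.

Lemma monotone_seq_inj d (T : orderType d) (u : nat -> T) :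
  (forall n, (u n < u n.+1)%O) \/ (forall n, (u n.+1 < u n)%O) -> injective u.
Proof.
case=> [incr | decr]; first exact: inc_inj (le_mono (homo_ltn_lt incr)).
exact: dec_inj (le_nmono (nhomo_ltn_lt decr)).
Qed.

Lemma orbit_injective d (T : orderType d) (P : {pred T}) (f : T -> T) (u : nat -> T) :
  (forall n, u n \in P) -> (forall n, u n.+1 = f (u n)) ->
  {in P &, {homo f : x y / (x < y)%O}} -> u 1 != u 0 -> injective u.
Proof.
move=> Pu uS f_incr u10; apply: monotone_seq_inj.
case: (ltgtP (u 0) (u 1)) => [lt01 | gt01 | eq01]; last by rewrite eq01 eqxx in u10.
  by left; elim=> // n IH; rewrite (uS n.+1) {1}(uS n); apply: f_incr (Pu n) (Pu n.+1) IH.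
by right; elim=> // n IH; rewrite (uS n.+1) {2}(uS n); apply: f_incr (Pu n.+1) (Pu n) IH.
Qed.

Section Construction.
Variables (R : realType) (b g lam : R).
Hypotheses (b_ge0 : 0 <= b) (g_ge0 : 0 <= g) (bg_neq0 : b != 0 \/ g != 0)
  (bg_lt1 : b * g < 1) (lam_gt0 : 0 < lam).
Local Notation X := (root_ratio b g lam).
Local Notation er := (edge_ratio b g).
Local Notation gap := (mag_gap b g lam).
Local Notation field_gadget := (is_field_gadget b g lam).

Let X_gt0 T : 0 < X T. Proof. exact: root_ratio_gt0. Qed.
Let er_gt0 (x : R) : 0 < x -> 0 < er x. Proof. exact: edge_ratio_gt0. Qed.

Lemma root_ratio_vertex : X vertex_graph = lam.
Proof. by rewrite /root_ratio !Zroot_vertex expr1 expr0 divr1. Qed.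

Lemma root_ratio_pendant H : X (pendant H) = lam * er (X H).
Proof. by rewrite root_ratio_attach // root_ratio_vertex. Qed.

Lemma root_ratio_node T S : X (node T S) = lam * er (lam * er (X T) * er (X S)).
Proof. by rewrite root_ratio_pendant root_ratio_attach // root_ratio_pendant. Qed.

Lemma root_ratio_edge : X edge_gadget = lam * er lam.
Proof. by rewrite root_ratio_pendant root_ratio_vertex. Qed.

Lemma root_ratio_triangle_graph :
  X triangle_graph = lam * (triangle_poly b g lam true / triangle_poly b g lam false).
Proof. by rewrite /root_ratio !Zroot_triangle expr1 expr0 mul1r mulrA. Qed.

Definition field_twins (T1 T2 : rootedGraph) : Prop := X T1 = X T2 /\ gap T1 <> gap T2.

Lemma field_twins_attachl G1 G2 H :
  field_twins G1 G2 -> field_twins (attach G1 H) (attach G2 H).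
Proof.
move=> [eqX neq_gap]; rewrite /field_twins !root_ratio_attach // !mag_gap_attach // eqX.
by split=> // /addIr.
Qed.

Lemma field_twins_attachr G H1 H2 :
  field_twins H1 H2 -> field_twins (attach G H1) (attach G H2).
Proof.
move=> [eqX neq_gap]; rewrite /field_twins !root_ratio_attach // !mag_gap_attach // eqX.
split=> // /addrI /mulfI eq_gap; apply: neq_gap; apply: eq_gap.
exact: edge_slope_neq0.
Qed.

Lemma field_twins_node T1 T2 S : field_twins T1 T2 -> field_twins (node T1 S) (node T2 S).
Proof.
by move=> twins; apply/field_twins_attachr/field_twins_attachl/field_twins_attachr.
Qed.

(* When edge_ratio lam = 1, root_ratio_node shows that every gadget built from edges by
   [node] has root ratio lam, so the triangle gadget is needed as a second candidate. *)
Section FixedEdgeRatio.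
Hypothesis er_lam : er lam = 1.

Lemma fixed_edge_ratio_eq : lam * (1 - g) = 1 - b.
Proof.
have := divr1_eq er_lam; lra.
Qed.

Lemma fixed_edge_ratio_g_neq1 : g != 1.
Proof.
apply/eqP=> g1; move: bg_lt1 fixed_edge_ratio_eq.
rewrite g1 subrr mulr0 mulr1 => + /esym/eqP.
by rewrite subr_eq0 => + /eqP b1; rewrite -b1 ltxx.
Qed.

Lemma fixed_edge_ratio_b_neq1 : b != 1.
Proof.
apply/eqP=> b1; move: fixed_edge_ratio_eq; rewrite b1 subrr => /eqP.
rewrite mulf_eq0 (gt_eqF lam_gt0) subr_eq0 eq_sym => /eqP g1.
by move: bg_lt1; rewrite b1 g1 mulr1 ltxx.
Qed.

Lemma triangle_gadget_condition : ~ (b = g /\ lam = 1) -> lam = (1 - b) / (1 - g) /\ b <> g.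
Proof.
have g1 : 1 - g != 0 by rewrite subr_eq0 eq_sym fixed_edge_ratio_g_neq1.
move=> not_trivial; split; first by rewrite -fixed_edge_ratio_eq mulfK.
move=> bg; apply: not_trivial; split=> //; apply/eqP.
have : (lam - 1) * (1 - g) == 0 by rewrite mulrBl mul1r fixed_edge_ratio_eq bg subrr.
by rewrite mulf_eq0 (negbTE g1) orbF subr_eq0.
Qed.

Lemma triangle_poly_sub :
  triangle_poly b g lam true - triangle_poly b g lam false = (1 - b) ^+ 2 * (g - b).
Proof.
have g1 : (1 - g) ^+ 2 != 0 by rewrite expf_neq0 // subr_eq0 eq_sym fixed_edge_ratio_g_neq1.
apply: (mulfI g1); rewrite /triangle_poly.
have -> : (1 - g) ^+ 2 * (lam ^+ 2 * g ^+ 3 + 2%:R * lam * g + b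
                           - (lam ^+ 2 * g + 2%:R * lam * b + b ^+ 3))
    = (lam * (1 - g)) ^+ 2 * g * (g ^+ 2 - 1) + 2%:R * (lam * (1 - g)) * (1 - g) * (g - b)
      + (1 - g) ^+ 2 * b * (1 - b ^+ 2) by ring.
by rewrite fixed_edge_ratio_eq; ring.
Qed.

Lemma triangle_poly_neq : b <> g -> triangle_poly b g lam true != triangle_poly b g lam false.
Proof.
move=> bg; rewrite -subr_eq0 triangle_poly_sub mulf_neq0 ?expf_neq0 //.
  by rewrite subr_eq0 eq_sym fixed_edge_ratio_b_neq1.
by rewrite subr_eq0; apply/eqP=> gb; apply: bg.
Qed.

End FixedEdgeRatio.

Lemma root_ratio_triangle_neq_edge : er lam = 1 -> b <> g ->
  X triangle_gadget != X edge_gadget.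
Proof.
move=> er_lam bg; rewrite root_ratio_edge root_ratio_pendant.
apply/eqP => /(mulfI (lt0r_neq0 lam_gt0)) eq_er.
have eqX := edge_ratio_inj b_ge0 bg_lt1 (X_gt0 _) lam_gt0 eq_er.
have : triangle_poly b g lam true / triangle_poly b g lam false = 1.
  by apply: (mulfI (lt0r_neq0 lam_gt0)); rewrite -root_ratio_triangle_graph eqX mulr1.
by move/divr1_eq/eqP; apply/negP/triangle_poly_neq.
Qed.

Lemma root_ratio_node_edge_neq : er lam != 1 ->
  X (node edge_gadget edge_gadget) != X edge_gadget.
Proof.
move=> er_lam; rewrite root_ratio_node root_ratio_edge.
apply/eqP => /(mulfI (lt0r_neq0 lam_gt0)) eq_er.
set y := er (lam * er lam) in eq_er.
have y_gt0 : 0 < y by apply/er_gt0/mulr_gt0/er_gt0.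
have lyy_gt0 := mulr_gt0 (mulr_gt0 lam_gt0 y_gt0) y_gt0.
have : lam * y * y = lam * 1.
  by rewrite mulr1 (edge_ratio_inj b_ge0 bg_lt1 lyy_gt0 lam_gt0 eq_er).
rewrite -mulrA => /(mulfI (lt0r_neq0 lam_gt0))/eqP.
rewrite -expr2 pexpr_eq1 ?ltW // => /eqP y1.
by move/eqP: er_lam; apply; apply: edge_ratio_fixed.
Qed.

Lemma exists_distinct_ratio_gadgets D : (3 <= D)%N -> ~ (b = g /\ lam = 1) ->
  exists S1 S2, [/\ field_gadget S1 /\ field_gadget S2, maxdeg_le S1 D /\ maxdeg_le S2 D &
                    X S1 != X S2].
Proof.
move=> D3 not_trivial; have gE := field_gadget_edge b g lam.
have mE : maxdeg_le edge_gadget D by apply: maxdeg_edge; apply: leq_trans D3.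
have [er_lam | er_lam] := eqVneq (er lam) 1.
  have [lam_eq bg] := triangle_gadget_condition er_lam not_trivial.
  exists triangle_gadget, edge_gadget; split; last exact: root_ratio_triangle_neq_edge.
    by split=> //; apply: field_gadget_triangle.
  by split=> //; apply: maxdeg_triangle.
have [degE _] := field_gadget_leaf_triangle_tree gE.
exists (node edge_gadget edge_gadget), edge_gadget; split.
- by split=> //; apply: field_gadget_node.
- by split=> //; apply: maxdeg_node.
- exact: root_ratio_node_edge_neq.
Qed.

Lemma exists_nonfixing_partner T D : (3 <= D)%N -> ~ (b = g /\ lam = 1) ->
  exists S, [/\ field_gadget S, maxdeg_le S D & X (node T S) != X T].
Proof.
move=> D3 not_trivial.
have [S1 [S2 [[gS1 gS2] [mS1 mS2] X12]]] := exists_distinct_ratio_gadgets D3 not_trivial.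
have [e1|] := eqVneq (X (node T S1)) (X T); last by exists S1.
have [e2|] := eqVneq (X (node T S2)) (X T); last by exists S2.
have er_pos T' : 0 < er (X T') by apply: er_gt0.
have arg_pos S' : 0 < lam * er (X T) * er (X S').
  exact: mulr_gt0 (mulr_gt0 lam_gt0 (er_pos T)) (er_pos S').
case/eqP: X12; apply: (edge_ratio_inj b_ge0 bg_lt1 (X_gt0 S1) (X_gt0 S2)).
apply: (mulfI (lt0r_neq0 (mulr_gt0 lam_gt0 (er_pos T)))).
apply: (edge_ratio_inj b_ge0 bg_lt1 (arg_pos S1) (arg_pos S2)).
by apply: (mulfI (lt0r_neq0 lam_gt0)); rewrite -!root_ratio_node e1 e2.
Qed.

Lemma node_ratio_incr S :
  {in Num.pos &, {homo (fun y => lam * er (lam * er y * er (X S))) : y z / y < z}}.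
Proof.
move=> y z; rewrite !posrE => y_gt0 z_gt0 yz.
have [ez eS] := (er_gt0 z_gt0, er_gt0 (X_gt0 S)).
rewrite ltr_pM2l //; apply: (edge_ratio_decr b_ge0 bg_lt1 (mulr_gt0 (mulr_gt0 lam_gt0 ez) eS)).
by rewrite ltr_pM2r // ltr_pM2l // (edge_ratio_decr b_ge0 bg_lt1).
Qed.

Lemma iter_node_ratio_inj T S : X (node T S) != X T ->
  injective (fun j => X (iter j (node^~ S) T)).
Proof.
move=> not_fixed; apply: (orbit_injective (P := Num.pos) _ _ (node_ratio_incr S)) => //= j.
- by rewrite posrE.
- by rewrite root_ratio_node.
Qed.

Definition twin_gadgets D (T1 T2 : rootedGraph) : Prop :=
  [/\ field_gadget T1 /\ field_gadget T2, maxdeg_le T1 D, maxdeg_le T2 D & field_twins T1 T2].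

Lemma twin_gadgets_node D T1 T2 S : (3 <= D)%N -> field_gadget S -> maxdeg_le S D ->
  twin_gadgets D T1 T2 -> twin_gadgets D (node T1 S) (node T2 S).
Proof.
move=> D3 gS mS [[gT1 gT2] mT1 mT2 twins].
have [degS _] := field_gadget_leaf_triangle_tree gS.
have [deg1 _] := field_gadget_leaf_triangle_tree gT1.
have [deg2 _] := field_gadget_leaf_triangle_tree gT2.
split; [split; exact: field_gadget_node | exact: maxdeg_node | exact: maxdeg_node |].
exact: field_twins_node.
Qed.

End Construction.

Theorem lemma2p8 (R : realType) (Delta : nat) (b g lam : R) :
  (3 <= Delta)%N ->
  antiferro b g ->
  0 < lam ->
  ~ (b = g /\ lam = 1) ->
  (exists T1 T2 : rootedGraph,
     [/\ is_field_gadget b g lam T1 /\ is_field_gadget b g lam T2,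
         maxdeg_le T1 Delta, maxdeg_le T2 Delta,
         eff_field b g lam T1 = eff_field b g lam T2 &
         mag_gap b g lam T1 <> mag_gap b g lam T2]) ->
  exists T1s T2s : nat -> rootedGraph,
    (forall j,
       [/\ is_field_gadget b g lam (T1s j) /\ is_field_gadget b g lam (T2s j),
           maxdeg_le (T1s j) Delta, maxdeg_le (T2s j) Delta,
           eff_field b g lam (T1s j) = eff_field b g lam (T2s j) &
           mag_gap b g lam (T1s j) <> mag_gap b g lam (T2s j)]) /\
    (forall i j, eff_field b g lam (T1s i) = eff_field b g lam (T1s j) -> i = j).
Proof.
move=> D3 [b_ge0 [g_ge0 [bg_lt1 bg_neq0]]] lam_gt0 not_trivial.
move=> [T1 [T2 [[gT1 gT2] mT1 mT2 eff12 gap12]]].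
have eff_fieldE := eff_field_eq b_ge0 g_ge0 bg_neq0 lam_gt0.
have [S [gS mS not_fixed]] :=
  exists_nonfixing_partner b_ge0 g_ge0 bg_neq0 bg_lt1 lam_gt0 T1 D3 not_trivial.
exists (fun j => iter j (node^~ S) T1), (fun j => iter j (node^~ S) T2); split.
  move=> j; have [[gj1 gj2] mj1 mj2 [ratio_eq gap_neq]] :
      twin_gadgets b g lam Delta (iter j (node^~ S) T1) (iter j (node^~ S) T2).
    elim: j => [|j]; last exact: twin_gadgets_node.
    by split=> //; split=> //; apply/eff_fieldE.
  by split=> //; apply/eff_fieldE.
by move=> i j /eff_fieldE; apply: iter_node_ratio_inj.
Qed.
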